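(* Let $g$ be an invertible, ergodic measure preserving transformation of a probability space $(X,\nu)$ with no periodic points. Let $B\subset X$ be measurable with $\nu(B)>0$, and let $N:B\to\{1,2,3,\dots\}$ be a measurable function such that $\tilde g(x):=g^{N(x)}(x)\in B$ for almost every $x\in B$ and $\int_B N\,d\nu<\infty$. Let $B'\subset B$ be a measurable set with $\nu(B')>0$, $\tilde g(B')=B'$, and $g_*=\tilde g|_{B'}$ invertible and $\nu$-preserving. Let $C\subset B'$ be a measurable subset with $\nu(C)>0$ and $g_*(C)=C$. Then $$\int_C N(x)\,d\nu\ge 1.$$ *)

From HB Require Import structures.
From mathcomp Require Import all_boot all_order all_algebra.
From mathcomp Require Import all_classical all_reals all_analysis.
Set Implicit Arguments. Unset Strict Implicit. Unset Printing Implicit Defensive.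
Import Order.TTheory GRing.Theory Num.Theory.
Local Open Scope classical_set_scope.
Local Open Scope ring_scope.

Section defs.
Context (d : measure_display) (X : measurableType d) (R : realType).

Definition invertible_mble (g : X -> X) : Prop :=
  measurable_fun setT g /\
  exists h : X -> X, [/\ measurable_fun setT h, cancel g h & cancel h g].

Definition measure_preserving (mu : {measure set X -> \bar R}) (g : X -> X) :=
  forall A, measurable A -> mu (g @^-1` A) = mu A.

Definition ergodic (mu : probability X R) (g : X -> X) :=
  forall A, measurable A -> g @^-1` A = A -> mu A = 0%E \/ mu A = 1%E.

Definition no_periodic_points (g : X -> X) :=
  forall (x : X) (n : nat), (0 < n)%N -> iter n g x <> x.

Definition induced_map (g : X -> X) (N : X -> nat) : X -> X :=
  fun x => iter (N x) g x.

Definition invertible_preserving_on (mu : {measure set X -> \bar R})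
  (D : set X) (f : X -> X) : Prop :=
  [/\ measurable_fun D f,
      (forall x, D x -> D (f x)),
      (exists h : X -> X, [/\ measurable_fun D h, (forall x, D x -> D (h x)),
          {in D, cancel f h} & {in D, cancel h f}]) &
      (forall A, measurable A -> A `<=` D -> mu (D `&` f @^-1` A) = mu A)].
End defs.

From HB Require Import structures.
From mathcomp Require Import all_boot all_order all_algebra.
From mathcomp Require Import all_classical all_reals all_analysis.
Import Order.TTheory GRing.Theory Num.Theory.
Local Open Scope classical_set_scope.
Local Open Scope ring_scope.

Set Implicit Arguments.
Unset Strict Implicit.
Unset Printing Implicit Defensive.

(** Kac's lemma for the tower over [C].  The sets [g^k (C `&` [set x | k < N x])]
    cover the Kakutani tower over [C], which is [g]-invariant because [N] is a
    return time to [C] and the induced map is onto [C].  By ergodicity the tower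
    has full measure, and since [g] preserves [nu] the total mass of the floors,
    [\sum_k nu (C `&` [set x | k < N x]) = \int_C N], is at least [1]. *)

Lemma iter_can (T : Type) (g h : T -> T) (k : nat) :
  cancel g h -> cancel (iter k g) (iter k h).
Proof.
by move=> gK; elim: k => [|k IHk] x //; rewrite iterSr iterS gK.
Qed.

(* With [h] the inverse of [g], this is the Kakutani tower
   [[set iter k g x | k, x with C x /\ k < N x]] over [C]. *)
Definition tower (T : Type) (h : T -> T) (N : T -> nat) (C : set T) : set T :=
  \bigcup_k iter k h @^-1` (C `&` [set x | (k < N x)%N]).

Section tower.
Variables (T : Type) (g h : T -> T) (N : T -> nat) (C : set T).
Hypotheses (gK : cancel g h) (hK : cancel h g).
Hypothesis N_pos : forall x, C x -> (0 < N x)%N.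
Hypothesis C_inv : (fun x => iter (N x) g x) @` C = C.

Lemma sub_tower : C `<=` tower h N C.
Proof. by move=> x Cx; exists 0%N => //; split => //=; exact: N_pos. Qed.

Lemma tower_preimage : g @^-1` tower h N C = tower h N C.
Proof.
have ginj : injective g := can_inj gK.
apply/seteqP; split => y /=.
  case=> [[|k]] _ /= [Cx kN].
    move: Cx; rewrite -{1}C_inv => -[z Cz]; have := N_pos Cz.
    case Nz: (N z) => [//|m] _ /= /ginj zy.
    by exists m => //; split; rewrite /= -zy iter_can // Nz.
  move: Cx kN; rewrite -iterS iterSr gK => Cx kN.
  by exists k => //; split => //; exact: ltnW.
case=> k _ /= [Cx kN].
have [kN'|Nk] := ltnP k.+1 (N (iter k h y)).
  by exists k.+1 => //; rewrite /= -iterS iterSr gK.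
have Nk1 : N (iter k h y) = k.+1 by apply/eqP; rewrite eqn_leq Nk kN.
have : C (iter (N (iter k h y)) g (iter k h y)).
  by rewrite -C_inv; exists (iter k h y).
rewrite Nk1 iterS (iter_can _ hK) => Cgy.
by exists 0%N => //; split => //=; exact: N_pos.
Qed.
End tower.

Section measure_preserving.
Context (d : measure_display) (X : measurableType d) (R : realType).
Variable mu : {measure set X -> \bar R}.

Lemma measurable_fun_iter (f : X -> X) (k : nat) :
  measurable_fun setT f -> measurable_fun setT (iter k f).
Proof.
move=> mf; elim: k => [|k IHk] /=; first exact: measurable_id.
exact: measurableT_comp mf IHk.
Qed.

Lemma measure_preserving_can (g h : X -> X) :
  measurable_fun setT h -> cancel g h ->
  measure_preserving mu g -> measure_preserving mu h.
Proof.
move=> mh gK g_mp A mA.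
have mhA : measurable (h @^-1` A) by rewrite -[_ @^-1` _]setTI; exact: mh.
rewrite -(g_mp _ mhA); congr (mu _).
by apply/seteqP; split => x /=; rewrite gK.
Qed.

Lemma measure_preserving_iter (f : X -> X) (k : nat) :
  measurable_fun setT f -> measure_preserving mu f ->
  measure_preserving mu (iter k f).
Proof.
move=> mf f_mp; elim: k => [|k IHk] A mA //=.
have mfA : measurable (f @^-1` A) by rewrite -[_ @^-1` _]setTI; exact: mf.
exact: (etrans (IHk _ mfA) (f_mp _ mA)).
Qed.

Lemma measurable_nat_gt (D : set X) (f : X -> nat) (k : nat) :
  measurable D -> measurable_fun D (fun x => (f x)%:R : R) ->
  measurable (D `&` [set x | (k < f x)%N]).
Proof.
move=> mD mf.
have -> : D `&` [set x | (k < f x)%N] =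
    D `&` ((fun x => (f x)%:R : R) @^-1` `]k%:R, +oo[).
  by apply/seteqP; split => x [Dx]; rewrite /= in_itv /= andbT ltr_nat.
exact: mf.
Qed.

(* The layer-cake formula for a [nat]-valued function: [f = \sum_k \1_{k < f}]. *)
Lemma integral_nat_layer (D : set X) (f : X -> nat) :
  measurable D -> measurable_fun D (fun x => (f x)%:R : R) ->
  (\int[mu]_(x in D) ((f x)%:R : R)%:E =
   \sum_(k <oo) mu (D `&` [set x | (k < f x)%N]))%E.
Proof.
move=> mD mf; have mDf k := measurable_nat_gt k mD mf.
transitivity (\sum_(k <oo) \int[mu]_(x in D)
                 (\1_(D `&` [set x | (k < f x)%N]) x)%:E)%E; last first.
  by apply: eq_eseriesr => k _; rewrite integral_indic // setIC setIA setIid.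
rewrite -integral_nneseries //; last first.
  move=> k; apply/measurable_realfun.measurable_EFinP.
  exact: measurable_realfun.measurable_indic.
apply: eq_integral => x /[!inE] Dx.
rewrite (nneseries_split 0 (f x)); last by move=> k _; rewrite lee_fin.
rewrite add0n eseries0 ?adde0; last first.
  by move=> k fk _; rewrite indicE memNset // => -[_ /=]; rewrite ltnNge fk.
rewrite (@eq_big_nat _ _ _ 0 (f x) _ (fun _ => 1%:E)); last first.
  by move=> k /andP[_ kf]; rewrite indicE mem_set.
by rewrite sumEFin sumr_const_nat subn0.
Qed.

Lemma ergodic_invariant_full (nu : probability X R) (g : X -> X) (A E : set X) :
  ergodic nu g -> measurable A -> g @^-1` A = A ->
  measurable E -> E `<=` A -> (0 < nu E)%E -> nu A = 1%E.
Proof.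
move=> g_erg mA Ainv mE EA nuE; case: (g_erg _ mA Ainv) => // A0.
have : (nu E <= nu A)%E by apply: le_measure; rewrite ?inE.
by rewrite A0 => /(lt_le_trans nuE); rewrite ltxx.
Qed.

Lemma measurable_tower (h : X -> X) (N : X -> nat) (C : set X) :
  measurable_fun setT h -> measurable C ->
  measurable_fun C (fun x => (N x)%:R : R) -> measurable (tower h N C).
Proof.
move=> mh mC mN; apply: bigcupT_measurable => k.
rewrite -[_ @^-1` _]setTI; apply: (measurable_fun_iter k mh) => //.
exact: measurable_nat_gt.
Qed.

(* Union bound over the floors, each of which has the mass of its base. *)
Lemma measure_tower_le (h : X -> X) (N : X -> nat) (C : set X) :
  measurable_fun setT h -> measure_preserving mu h -> measurable C ->
  measurable_fun C (fun x => (N x)%:R : R) ->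
  (mu (tower h N C) <= \int[mu]_(x in C) ((N x)%:R : R)%:E)%E.
Proof.
move=> mh h_mp mC mN; rewrite integral_nat_layer //.
have mfloor k : measurable (iter k h @^-1` (C `&` [set x | (k < N x)%N])).
  by rewrite -[_ @^-1` _]setTI; apply: (measurable_fun_iter k mh) => //;
     exact: measurable_nat_gt.
apply: le_trans (measure_sigma_subadditive mu mfloor
  (measurable_tower mh mC mN) (@subset_refl _ _)) _.
by rewrite (eq_eseriesr (fun k _ =>
  measure_preserving_iter k mh h_mp (measurable_nat_gt k mC mN))).
Qed.

End measure_preserving.

Theorem corollary3p8 (d : measure_display) (X : measurableType d) (R : realType)
  (nu : probability X R) (g : X -> X)
  (g_inv : invertible_mble g)
  (g_mp : measure_preserving nu g)
  (g_erg : ergodic nu g)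
  (g_aper : no_periodic_points g)
  (B : set X) (mB : measurable B) (nuB : (0 < nu B)%E)
  (N : X -> nat) (N_pos : forall x, B x -> (0 < N x)%N)
  (mN : measurable_fun B (fun x => (N x)%:R : R))
  (N_ret : {ae nu, forall x, B x -> B (induced_map g N x)})
  (N_int : (\int[nu]_(x in B) ((N x)%:R : R)%:E < +oo)%E)
  (B' : set X) (mB' : measurable B') (B'B : B' `<=` B) (nuB' : (0 < nu B')%E)
  (B'inv : induced_map g N @` B' = B')
  (gstar : invertible_preserving_on nu B' (induced_map g N))
  (C : set X) (mC : measurable C) (CB' : C `<=` B') (nuC : (0 < nu C)%E)
  (Cinv : induced_map g N @` C = C) :
  (1 <= \int[nu]_(x in C) ((N x)%:R : R)%:E)%E.
Proof.
case: g_inv => mg [h [mh gK hK]].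
have CB : C `<=` B := subset_trans CB' B'B.
have mNC : measurable_fun C (fun x => (N x)%:R : R) := measurable_funS mB CB mN.
have N_posC x : C x -> (0 < N x)%N := fun Cx => N_pos x (CB x Cx).
rewrite -(ergodic_invariant_full g_erg (measurable_tower mh mC mNC)
  (tower_preimage gK hK N_posC Cinv) mC (sub_tower h N_posC) nuC).
exact: measure_tower_le mh (measure_preserving_can mh gK g_mp) mC mNC.
Qed.
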